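(* There exist pairs of measurement channels corresponding to non-commuting $2$-outcome POVMs $M=\{M_0,M_1\}$, $N=\{N_0,N_1\}$ that form a Maximal Entanglement Worst Case pair. For instance, $M_0=\begin{pmatrix}\tfrac{1}{10}&0\\0&\tfrac15\end{pmatrix}$, $M_1=I-M_0$, and $N_0=\begin{pmatrix}\tfrac{3}{10}&\sqrt{\tfrac1{10}}\\\sqrt{\tfrac1{10}}&\tfrac7{10}\end{pmatrix}$, $N_1=I-N_0$, give a MEWC pair (here $M_0-N_0$ has eigenvalues $-\tfrac7{10}$ and $0$, so it is rank one).
   Context: The measurement channel of a POVM $M$ is $\Phi_M(\rho)=\sum_i\operatorname{Tr}(\rho M_i)\,|i\rangle\langle i|$. With $\Delta_\Phi=\Phi_M-\Phi_N$, input dimension $d=2$, Choi operator $J(\mathcal{S})=\sum_{ij}\mathcal{S}(|i\rangle\langle j|)\otimes|i\rangle\langle j|$, ME-norm $\|\mathcal{S}\|_{\mathrm{ME}}=\|J(\mathcal{S})/d\|_1$ and diamond norm $\|\mathcal{S}\|_\diamond=\max_{\rho_{AA'}}\|(\mathcal{S}\otimes I_{A'})\rho_{AA'}\|_1$, the pair is Maximal Entanglement Worst Case (MEWC) if $\|\Delta_\Phi\|_\diamond=d\|\Delta_\Phi\|_{\mathrm{ME}}$; for dichotomic qubit measurements with $M_1\neq N_1$ this is equivalent to $\det(M_0-N_0)=0$. *)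

From mathcomp Require Import all_boot all_order all_algebra.
From mathcomp Require Import classical_sets reals.
From mathcomp Require Export complex mxtens.
Set Implicit Arguments. Unset Strict Implicit. Unset Printing Implicit Defensive.
Import Order.TTheory GRing.Theory Num.Theory.
Local Open Scope ring_scope.
Local Open Scope classical_set_scope.
Local Open Scope complex_scope.

Section QuantumDefs.
Variable R : realType.
Local Notation C := R[i].

Definition adjmx {m n} (A : 'M[C]_(m, n)) : 'M[C]_(n, m) :=
  (map_mx (fun z : C => z^*) A)^T.

Definition unitarymx {n} (U : 'M[C]_n) : Prop := U *m adjmx U = 1%:M.

Definition psdmx {n} (A : 'M[C]_n) : Prop :=
  forall v : 'cV[C]_n, 0 <= (adjmx v *m A *m v) ord0 ord0.

Definition densitymx {n} (rho : 'M[C]_n) : Prop := psdmx rho /\ \tr rho = 1.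

Definition trace_norm {n} (X : 'M[C]_n) : R :=
  sup [set r : R | exists U : 'M[C]_n, unitarymx U /\ r%:C = `|\tr (U *m X)|].

Definition povm {k d} (M : 'I_k -> 'M[C]_d) : Prop :=
  (forall i, psdmx (M i)) /\ \sum_(i < k) M i = 1%:M.

Definition meas_channel {k d} (M : 'I_k -> 'M[C]_d) (rho : 'M[C]_d) : 'M[C]_k :=
  \sum_(i < k) \tr (rho *m M i) *: delta_mx i i.

Definition diff_channel {k d} (M N : 'I_k -> 'M[C]_d) (rho : 'M[C]_d) : 'M[C]_k :=
  meas_channel M rho - meas_channel N rho.

(* (S (x) I_{A'}) rho, with A' of the same dimension d as A; the tensor
   product uses mxtens' convention (A *t B) (i,j) (k,l) = A i k * B j l. *)
Definition ext_id {d k} (S : 'M[C]_d -> 'M[C]_k) (rho : 'M[C]_(d * d)) : 'M[C]_(k * d) :=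
  \sum_(i < d) \sum_(j < d) \sum_(a < d) \sum_(b < d)
     rho (mxtens_index (i, j)) (mxtens_index (a, b)) *: (S (delta_mx i a) *t delta_mx j b).

Definition choi {d k} (S : 'M[C]_d -> 'M[C]_k) : 'M[C]_(k * d) :=
  \sum_(i < d) \sum_(j < d) (S (delta_mx i j) *t delta_mx i j).

Definition me_norm {d k} (S : 'M[C]_d -> 'M[C]_k) : R :=
  trace_norm ((d%:R)^-1 *: choi S).

Definition diamond_norm {d k} (S : 'M[C]_d -> 'M[C]_k) : R :=
  sup [set r : R | exists rho : 'M[C]_(d * d), densitymx rho /\ r = trace_norm (ext_id S rho)].

Definition MEWC {k d} (M N : 'I_k -> 'M[C]_d) : Prop :=
  diamond_norm (diff_channel M N) = d%:R * me_norm (diff_channel M N).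

Definition mx2 (a b c e : C) : 'M[C]_2 :=
  \matrix_(i < 2, j < 2)
     if i == ord0 then (if j == ord0 then a else b) else (if j == ord0 then c else e).

Definition dich (E : 'M[C]_2) : 'I_2 -> 'M[C]_2 :=
  fun i => if i == ord0 then E else 1%:M - E.

Definition exM0 : 'M[C]_2 := mx2 (10%:R)^-1 0 0 (5%:R)^-1.
Definition exN0 : 'M[C]_2 :=
  mx2 (3%:R / 10%:R) (Num.sqrt ((10%:R)^-1 : R))%:C
      (Num.sqrt ((10%:R)^-1 : R))%:C (7%:R / 10%:R).

End QuantumDefs.

From Pilot Require Import Defs.
From mathcomp Require Import all_boot all_order all_algebra.
From mathcomp Require Import boolp classical_sets reals complex mxtens.
From mathcomp Require Import sesquilinear spectral.
From mathcomp Require Import ring lra.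
Import Order.TTheory GRing.Theory Num.Theory.
Set Implicit Arguments. Unset Strict Implicit. Unset Printing Implicit Defensive.
Local Open Scope ring_scope.

(* For dichotomic POVMs, Phi_M - Phi_N sends X to Tr(X D) sigma_z with D = M_0 - N_0.
   When D = -w w^* has rank one, the Choi operator is sigma_z (x) D^T, whose trace norm is
   2|w|^2, so ||Delta||_ME = 2|w|^2 / d.  On a pure input x the extended channel outputs
   -sigma_z (x) y y^* with y = (<w| (x) 1) x; its trace norm 2|y|^2 is at most 2|w|^2 |x|^2 by
   Cauchy-Schwarz, the bound passes to mixed states through their spectral decomposition, and
   it is attained at x = w (x) w.  Hence ||Delta||_<> = 2|w|^2 = d ||Delta||_ME.  In the example
   M_0 - N_0 = -w w^* with w = (1/sqrt 5, 1/sqrt 2), and M_0 N_0 <> N_0 M_0. *)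

Lemma sum_ord2 (V : nmodType) (F : 'I_2 -> V) : \sum_i F i = F 0 + F 1.
Proof. by rewrite big_ord_recl big_ord1; congr (_ + F _); apply: val_inj. Qed.

Lemma sum_mxtens_index (V : nmodType) m n (F : 'I_(m * n) -> V) :
  \sum_k F k = \sum_i \sum_j F (mxtens_index (i, j)).
Proof.
rewrite pair_big /= (reindex (@mxtens_index m n)) /=; last first.
  by exists (@mxtens_unindex m n) => k _; rewrite (mxtens_indexK, mxtens_unindexK).
by apply: eq_bigr => -[i j].
Qed.

Section TensorProduct.
Variable K : comPzRingType.

Lemma tensmxBl m n p q (A B : 'M[K]_(m, n)) (D : 'M[K]_(p, q)) :
  (A - B) *t D = A *t D - B *t D.
Proof. by apply/matrixP => i j; rewrite !mxE mulrBl. Qed.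

Lemma tensmxNr m n p q (A : 'M[K]_(m, n)) (B : 'M[K]_(p, q)) : A *t (- B) = - (A *t B).
Proof. by apply/matrixP => i j; rewrite !mxE mulrN. Qed.

Lemma tensmxZl m n p q a (A : 'M[K]_(m, n)) (B : 'M[K]_(p, q)) :
  (a *: A) *t B = a *: (A *t B).
Proof. by apply/matrixP => i j; rewrite !mxE mulrA. Qed.

Lemma tensmxZr m n p q a (A : 'M[K]_(m, n)) (B : 'M[K]_(p, q)) :
  A *t (a *: B) = a *: (A *t B).
Proof. by apply/matrixP => i j; rewrite !mxE mulrCA. Qed.

Lemma tensmx_sumr m n p q (A : 'M[K]_(m, n)) I (r : seq I) (F : I -> 'M[K]_(p, q)) :
  A *t (\sum_(k <- r) F k) = \sum_(k <- r) A *t F k.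
Proof.
elim: r => [|k r IHr]; first by rewrite !big_nil tensmx0.
by rewrite !big_cons -IHr; apply/matrixP => i j; rewrite !mxE mulrDr.
Qed.

Lemma mxtrace_tensmx m n (A : 'M[K]_m) (B : 'M[K]_n) : \tr (A *t B) = \tr A * \tr B.
Proof. by rewrite /mxtrace mulr_sum; apply: eq_bigr => k _; rewrite !mxE. Qed.

Lemma tensmx11 m n : (1%:M : 'M[K]_m) *t (1%:M : 'M[K]_n) = 1%:M.
Proof.
apply/matrixP => i j; case: (mxtens_indexP i) => i1 i2; case: (mxtens_indexP j) => j1 j2.
rewrite tensmxE !mxE (can_eq (@mxtens_indexK m n)) xpair_eqE.
by case: (i1 == j1); case: (i2 == j2); rewrite ?mulr1 ?mulr0.
Qed.

End TensorProduct.

Lemma mxtrace_delta_mul (K : comPzRingType) n (i j : 'I_n) (D : 'M[K]_n) :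
  \tr (delta_mx i j *m D) = D j i.
Proof.
rewrite -(mul_delta_mx (0 : 'I_1)) -mulmxA mxtrace_mulC trace_mx11.
by rewrite -rowE -colE !mxE.
Qed.

Section HermitianGeometry.
Variable C : numClosedFieldType.
Local Open Scope sesquilinear_scope.

Definition sqnorm n (v : 'cV[C]_n) : C := (v ^t* *m v) 0 0.

Lemma sqnormE n (v : 'cV[C]_n) : sqnorm v = \sum_k `|v k 0| ^+ 2.
Proof. by rewrite /sqnorm mxE; apply: eq_bigr => k _; rewrite !mxE normCK mulrC. Qed.

Lemma sqnorm_ge0 n (v : 'cV[C]_n) : 0 <= sqnorm v.
Proof. by rewrite sqnormE; apply: sumr_ge0 => k _; apply: exprn_ge0. Qed.

Lemma mxtrace_outer n (v : 'cV[C]_n) : \tr (v *m v ^t*) = sqnorm v.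
Proof. by rewrite mxtrace_mulC trace_mx11. Qed.

Lemma CauchySchwarz_cV n (u v : 'cV[C]_n) :
  `|(u ^t* *m v) 0 0| ^+ 2 <= sqnorm u * sqnorm v.
Proof.
have dotE (a b : 'cV[C]_n) : dotmx a^T b^T = (b ^t* *m a) 0 0.
  by rewrite dotmxE !mxE; apply: eq_bigr => k _; rewrite !mxE mulrC.
by rewrite /sqnorm -!dotE mulrC; apply: (CauchySchwarz (@dotmx C n) _ _).1.
Qed.

Lemma sqnorm_unitary n (U : 'M[C]_n) (v : 'cV[C]_n) :
  U \is unitarymx -> sqnorm (U *m v) = sqnorm v.
Proof. by move=> Uu; rewrite /sqnorm trmx_mul map_mxM mulmxA mulmxKtV. Qed.

Lemma trace_unitary_outer_le n (U : 'M[C]_n) (v : 'cV[C]_n) :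
  U \is unitarymx -> `|\tr (U *m (v *m v ^t*))| <= sqnorm v.
Proof.
move=> Uu; rewrite mulmxA mxtrace_mulC trace_mx11.
rewrite -(ler_pXn2r (n := 2)) ?nnegrE ?sqnorm_ge0 //.
rewrite [X in _ <= X]expr2 -[X in _ <= _ * X](sqnorm_unitary v Uu).
exact: CauchySchwarz_cV.
Qed.

Lemma sqnorm_conj n (v : 'cV[C]_n) : sqnorm (map_mx Num.conj v) = sqnorm v.
Proof. by rewrite !sqnormE; apply: eq_bigr => k _; rewrite mxE norm_conjC. Qed.

Lemma unitarymx1 n : (1%:M : 'M[C]_n) \is unitarymx.
Proof. by apply/unitarymxP; rewrite trmx1 map_mx1 mulmx1. Qed.

Lemma unitarymxN n (U : 'M[C]_n) : U \is unitarymx -> - U \is unitarymx.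
Proof.
move=> /unitarymxP UU; apply/unitarymxP.
by rewrite linearN /= map_mxN mulNmx mulmxN opprK.
Qed.

Lemma adj_tensmx m n p q (A : 'M[C]_(m, n)) (B : 'M[C]_(p, q)) :
  (A *t B) ^t* = A ^t* *t B ^t*.
Proof. by rewrite trmx_tens map_mxT. Qed.

Lemma sqnorm_tensmx m n (u : 'cV[C]_m) (v : 'cV[C]_n) :
  sqnorm (u *t v) = sqnorm u * sqnorm v.
Proof. by rewrite -!mxtrace_outer -mxtrace_tensmx -tensmx_mul -adj_tensmx. Qed.

Lemma adj_delta m n (i : 'I_m) (j : 'I_n) : (delta_mx i j : 'M[C]_(m, n)) ^t* = delta_mx j i.
Proof. by rewrite trmx_delta map_delta_mx. Qed.

Lemma sqnorm_delta n (i : 'I_n) : sqnorm (delta_mx i 0 : 'cV[C]_n) = 1.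
Proof. by rewrite /sqnorm adj_delta mul_delta_mx mxE !eqxx. Qed.

Lemma mx_qform_eq0 n (B : 'M[C]_n) :
  (forall v : 'cV[C]_n, (v ^t* *m B *m v) 0 0 = 0) -> B = 0.
Proof.
move=> qB0.
have Be i j : (delta_mx 0 i : 'rV[C]_n) *m B *m delta_mx j 0 = (B i j)%:M.
  by rewrite -rowE -colE [LHS]mx11_scalar !mxE.
have qform_e c i j : let v : 'cV[C]_n := delta_mx i 0 + c *: delta_mx j 0 in
    (v ^t* *m B *m v) 0 0 = B i i + c * B i j + c^* * B j i + c^* * c * B j j.
  rewrite /= [(_ + _)^T]linearD /= [(_ *: _)^T]linearZ /= map_mxD map_mxZ !adj_delta.
  rewrite mulmxDl mulmxDr !mulmxDl -!scalemxAl -!scalemxAr !Be !mxE /=.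
  by rewrite !mulr1n; ring.
have Bdiag k : B k k = 0.
  by have := qB0 (delta_mx k 0 + 0 *: delta_mx k 0); rewrite qform_e conjC0 !mul0r !addr0.
apply/matrixP => i j; rewrite mxE.
have := qB0 (delta_mx i 0 + 1 *: delta_mx j 0).
have := qB0 (delta_mx i 0 + 'i *: delta_mx j 0).
rewrite !qform_e !Bdiag conjCi rmorph1 !mul1r !mulr0 !add0r !addr0 => h2 h1.
have : 2%:R * B i j = (B i j + B j i) - 'i * ('i * B i j + - 'i * B j i)
    + ('i ^+ 2 + 1) * (B i j - B j i) by ring.
rewrite h1 h2 sqrCi addNr mulr0 mul0r !subr0 addr0.
by move/eqP; rewrite mulf_eq0 pnatr_eq0 => /eqP.
Qed.

Definition sigmaz : 'M[C]_2 := delta_mx 0 0 - delta_mx 1 1.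

Lemma sigmaz_adj : sigmaz ^t* = sigmaz.
Proof. by rewrite /sigmaz linearB /= map_mxB !adj_delta. Qed.

Lemma sigmaz_sqr : sigmaz *m sigmaz = 1%:M.
Proof.
rewrite /sigmaz mulmxBl !mulmxBr !mul_delta_mx !mul_delta_mx_0 // subr0 sub0r opprK.
by rewrite mx1_sum_delta big_ord_recl big_ord1.
Qed.

Lemma unitarymx_sigmaz_tens n : sigmaz *t (1%:M : 'M[C]_n) \is unitarymx.
Proof.
apply/unitarymxP; rewrite adj_tensmx tensmx_mul sigmaz_adj sigmaz_sqr.
by rewrite trmx1 map_mx1 mulmx1 tensmx11.
Qed.

Lemma trace_sigmaz_outer_le n (U : 'M[C]_(2 * n)) (y : 'cV[C]_n) :
  U \is unitarymx -> `|\tr (U *m (sigmaz *t (y *m y ^t*)))| <= 2%:R * sqnorm y.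
Proof.
move=> Uu; pose e k : 'cV[C]_2 := delta_mx k 0.
have outer_e k : (e k *t y) *m (e k *t y) ^t* = delta_mx k k *t (y *m y ^t*).
  by rewrite adj_tensmx tensmx_mul adj_delta mul_delta_mx.
have sqnorm_e k : sqnorm (e k *t y) = sqnorm y.
  by rewrite sqnorm_tensmx sqnorm_delta mul1r.
rewrite /sigmaz tensmxBl -!outer_e mulmxBr linearB /=.
apply: le_trans (ler_normB _ _) _; rewrite mulr2n mulrDl mul1r.
by apply: lerD; [rewrite -(sqnorm_e 0) | rewrite -(sqnorm_e 1)];
  apply: trace_unitary_outer_le.
Qed.

(* [tens_block rho i a] is the operator <i| rho |a> on the second tensor factor,
   and [contract1 w x] is the vector (<w| (x) 1) x. *)
Definition tens_block d (rho : 'M[C]_(d * d)) (i a : 'I_d) : 'M[C]_d :=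
  \matrix_(j, b) rho (mxtens_index (i, j)) (mxtens_index (a, b)).

Definition contract1 d (w : 'cV[C]_d) (x : 'cV[C]_(d * d)) : 'cV[C]_d :=
  \col_j \sum_i (w i 0)^* * x (mxtens_index (i, j)) 0.

Lemma contract1_tensmx d (w u v : 'cV[C]_d) :
  contract1 w (u *t v) = (w ^t* *m u) 0 0 *: v.
Proof.
apply/matrixP => j k; rewrite !ord1 !mxE mulr_suml; apply: eq_bigr => i _.
by rewrite !mxE mxtens_indexK /= !ord1 mulrA.
Qed.

Lemma sqnorm_contract1_le d (w : 'cV[C]_d) (x : 'cV[C]_(d * d)) :
  sqnorm (contract1 w x) <= sqnorm w * sqnorm x.
Proof.
pose x_ j : 'cV[C]_d := \col_i x (mxtens_index (i, j)) 0.
have -> : sqnorm x = \sum_j sqnorm (x_ j).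
  rewrite sqnormE sum_mxtens_index exchange_big; apply: eq_bigr => j _.
  by rewrite sqnormE; apply: eq_bigr => i _; rewrite mxE.
rewrite [sqnorm (contract1 _ _)]sqnormE mulr_sumr; apply: ler_sum => j _.
have -> : contract1 w x j 0 = (w ^t* *m x_ j) 0 0.
  by rewrite !mxE; apply: eq_bigr => i _; rewrite !mxE.
exact: CauchySchwarz_cV.
Qed.

Lemma sum_tens_block_rank1 d (w : 'cV[C]_d) (x : 'cV[C]_(d * d)) :
  \sum_i \sum_a (- (w *m w ^t*)) a i *: tens_block (x *m x ^t*) i a =
  - (contract1 w x *m (contract1 w x) ^t*).
Proof.
apply/matrixP => j b; rewrite !summxE !mxE big_ord1 !mxE rmorph_sum mulr_suml -sumrN.
apply: eq_bigr => i _; rewrite !summxE mulr_sumr -sumrN; apply: eq_bigr => a _.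
by rewrite !mxE !big_ord1 !mxE rmorphM /= conjCK; ring.
Qed.

Lemma qform_outer_ge0 n (x v : 'cV[C]_n) : 0 <= (v ^t* *m (x *m x ^t*) *m v) 0 0.
Proof.
rewrite mulmxA -mulmxA mxE big_ord1.
have -> : (v ^t* *m x) 0 0 = ((x ^t* *m v) 0 0)^*.
  by rewrite !mxE rmorph_sum; apply: eq_bigr => k _; rewrite !mxE rmorphM /= conjCK mulrC.
by rewrite mulrC -normCK exprn_ge0.
Qed.

Section PositiveSemidefinite.
Variables (n : nat) (A : 'M[C]_n).
Hypothesis A_psd : forall v : 'cV[C]_n, 0 <= (v ^t* *m A *m v) 0 0.

Lemma psd_adj : A ^t* = A.
Proof.
apply/eqP; rewrite -subr_eq0; apply/eqP/mx_qform_eq0 => v.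
have qA_real : (v ^t* *m A *m v) 0 0 \is Num.real by apply/ger0_real.
rewrite mulmxBr mulmxBl.
have -> : v ^t* *m A ^t* *m v = (v ^t* *m A *m v) ^t*.
  by rewrite !trmx_mul !map_mxM trmxCK mulmxA.
move: (v ^t* *m A *m v) qA_real => X XR.
by rewrite !mxE conj_Creal // subrr.
Qed.

Lemma psd_spectral : exists (d : 'I_n -> C) (x : 'I_n -> 'cV[C]_n),
  [/\ A = \sum_k d k *: (x k *m (x k) ^t*), forall k, 0 <= d k
    & forall k, sqnorm (x k) = 1].
Proof.
have /orthomx_spectralP : A \is normalmx by apply/normalmxP; rewrite psd_adj.
set P := spectralmx A; set d := spectral_diag A.
have Pu : P \is unitarymx := spectral_unitarymx A.
rewrite invmx_unitary // => AE.
pose x k : 'cV[C]_n := (row k P) ^t*.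
have Px k : P *m x k = delta_mx k 0.
  rewrite /x -[P in P *m _]trmxCK -map_mxM -trmx_mul.
  by rewrite -row_mul (unitarymxP Pu) rowE mulmx1 adj_delta.
exists (fun k => d 0 k), x; split => [|k|k].
- apply/matrixP => i j; rewrite {1}AE mul_mx_diag summxE !mxE.
  by apply: eq_bigr => k _; rewrite !mxE big_ord1 !mxE conjCK mulrCA mulrA.
- have -> : d 0 k = ((x k) ^t* *m A *m x k) 0 0.
    rewrite AE -!mulmxA Px !mulmxA -map_mxM -trmx_mul Px adj_delta.
    by rewrite -rowE -colE !mxE eqxx mulr1n.
  exact: A_psd.
- by rewrite -(sqnorm_unitary _ Pu) Px sqnorm_delta.
Qed.

Lemma psd_linear_le (f : 'M[C]_n -> C) (c : C) : 0 <= c ->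
  {morph f : X Y / X + Y} -> (forall a X, f (a *: X) = a * f X) ->
  (forall x : 'cV[C]_n, `|f (x *m x ^t*)| <= c * sqnorm x) ->
  `|f A| <= c * \tr A.
Proof.
move=> c0 fD fZ fx; have [d [x [-> d0 x1]]] := psd_spectral.
have f0 : f 0 = 0 by have := fZ 0 0; rewrite scale0r mul0r.
rewrite (big_morph f fD f0) linear_sum mulr_sumr.
apply: le_trans (ler_norm_sum _ _ _) _; apply: ler_sum => k _.
rewrite fZ linearZ /= mxtrace_outer x1 mulr1 normrM ger0_norm // mulrC.
by apply: ler_wpM2r => //; have := fx (x k); rewrite x1 mulr1.
Qed.

End PositiveSemidefinite.

End HermitianGeometry.

Arguments sigmaz {C}.

Section Norms.
Variable R : realType.
Local Open Scope complex_scope.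
(* Reopened so that x^* is Num.conj and not complex's conjc. *)
Local Open Scope ring_scope.
Local Open Scope sesquilinear_scope.
Local Notation C := R[i].

Lemma conjcE (z : C) : (z^*)%C = z^*.
Proof.
have [->|nz] := eqVneq z 0; first by rewrite conjc0 conjC0.
by apply: (mulfI nz); rewrite -normCK sqr_normc.
Qed.

Lemma conj_realC (r : R) : (r%:C)^* = r%:C.
Proof. by rewrite -conjcE conjc_real. Qed.

Lemma adjmxE m n (A : 'M[C]_(m, n)) : adjmx A = A ^t*.
Proof. by apply/matrixP => i j; rewrite !mxE conjcE. Qed.

Lemma unitarymxE n (U : 'M[C]_n) : Defs.unitarymx U <-> U \is unitarymx.
Proof. by rewrite /Defs.unitarymx adjmxE; split => /unitarymxP. Qed.

Lemma psdmxE n (A : 'M[C]_n) :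
  psdmx A <-> forall v : 'cV[C]_n, 0 <= (v ^t* *m A *m v) 0 0.
Proof. by split => Apsd v; [rewrite -adjmxE | rewrite adjmxE]. Qed.

Lemma sup_eq_max (E : set R) c : E c -> ubound E c -> sup E = c.
Proof.
move=> Ec ubc; apply/le_anti/andP; split; first by apply: ge_sup => //; exists c.
by apply: ub_le_sup Ec; exists c.
Qed.

Lemma trace_norm_le n (X : 'M[C]_n) (c : R) :
  (forall U, U \is unitarymx -> `|\tr (U *m X)| <= c%:C) -> trace_norm X <= c.
Proof.
move=> Xc; apply: ge_sup => [|r [U [/unitarymxE Uu rE]]]; last by rewrite -lecR rE Xc.
have /complex_realP [r rE] := normr_real (\tr (1%:M *m X)).
by exists r, 1%:M; split; [apply/unitarymxE/unitarymx1 | rewrite rE].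
Qed.

Lemma trace_norm_eq n (X U0 : 'M[C]_n) (c : R) :
  U0 \is unitarymx -> `|\tr (U0 *m X)| = c%:C ->
  (forall U, U \is unitarymx -> `|\tr (U *m X)| <= c%:C) -> trace_norm X = c.
Proof.
move=> U0u U0c Xc; apply: sup_eq_max; first by exists U0; split => //; apply/unitarymxE.
by move=> r [U [/unitarymxE Uu rE]]; rewrite -lecR rE Xc.
Qed.

Lemma trace_normN n (X : 'M[C]_n) : trace_norm (- X) = trace_norm X.
Proof.
rewrite /trace_norm; congr sup; apply/funext => r; apply/propext.
split=> -[U [/unitarymxE Uu rE]]; exists (- U).
  by split; [apply/unitarymxE/unitarymxN | rewrite rE mulNmx mulmxN].
by split; [apply/unitarymxE/unitarymxN | rewrite rE mulNmx mulmxN opprK].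
Qed.

Lemma trace_norm_sigmaz_outer n (y : 'cV[C]_n) (c s : R) :
  0 <= c -> sqnorm y = s%:C ->
  trace_norm (c%:C *: (sigmaz *t (y *m y ^t*))) = c * (2%:R * s).
Proof.
move=> c0 ys; have s0 : 0 <= s by rewrite -lecR -ys sqnorm_ge0.
have csE : (c * (2%:R * s))%:C = c%:C * (2%:R * s%:C) by rewrite !rmorphM rmorph_nat.
apply: (trace_norm_eq (unitarymx_sigmaz_tens _ n)) => [|U Uu].
  rewrite -scalemxAr mxtraceZ tensmx_mul sigmaz_sqr mul1mx mxtrace_tensmx.
  by rewrite mxtrace1 mxtrace_outer ys csE ger0_norm // -csE lecR !mulr_ge0.
rewrite -scalemxAr mxtraceZ normrM ger0_norm ?lecR // csE -ys.
by apply: ler_wpM2l; [rewrite lecR | apply: trace_sigmaz_outer_le].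
Qed.

Lemma ext_idD d k (S : 'M[C]_d -> 'M[C]_k) A B :
  ext_id S (A + B) = ext_id S A + ext_id S B.
Proof.
rewrite /ext_id -big_split; apply: eq_bigr => i _; rewrite -big_split.
apply: eq_bigr => j _; rewrite -big_split; apply: eq_bigr => a _.
by rewrite -big_split; apply: eq_bigr => b _; rewrite mxE scalerDl.
Qed.

Lemma ext_idZ d k (S : 'M[C]_d -> 'M[C]_k) c A :
  ext_id S (c *: A) = c *: ext_id S A.
Proof.
rewrite /ext_id scaler_sumr; apply: eq_bigr => i _; rewrite scaler_sumr.
apply: eq_bigr => j _; rewrite scaler_sumr; apply: eq_bigr => a _.
by rewrite scaler_sumr; apply: eq_bigr => b _; rewrite mxE scalerA.
Qed.

Lemma ext_idE d k (S : 'M[C]_d -> 'M[C]_k) rho :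
  ext_id S rho = \sum_i \sum_a S (delta_mx i a) *t tens_block rho i a.
Proof.
rewrite /ext_id; apply: eq_bigr => i _; rewrite exchange_big /=.
apply: eq_bigr => a _; rewrite [tens_block _ _ _]matrix_sum_delta tensmx_sumr.
apply: eq_bigr => j _; rewrite tensmx_sumr; apply: eq_bigr => b _.
by rewrite tensmxZr mxE.
Qed.

Lemma trace_norm_ext_id_le d k (S : 'M[C]_d -> 'M[C]_k) (rho : 'M[C]_(d * d)) c :
  densitymx rho -> 0 <= c ->
  (forall U (x : 'cV[C]_(d * d)), U \is unitarymx ->
     `|\tr (U *m ext_id S (x *m x ^t*))| <= c%:C * sqnorm x) ->
  trace_norm (ext_id S rho) <= c.
Proof.
move=> [/psdmxE rho_psd rho_tr] c0 Sc; apply: trace_norm_le => U Uu.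
rewrite -[c%:C]mulr1 -rho_tr.
apply: (psd_linear_le rho_psd (f := fun A => \tr (U *m ext_id S A))).
- by rewrite lecR.
- by move=> A B /=; rewrite ext_idD mulmxDr mxtraceD.
- by move=> a A /=; rewrite ext_idZ -scalemxAr mxtraceZ.
- by move=> x; apply: Sc.
Qed.

Definition sigmaz_channel d (D : 'M[C]_d) (X : 'M[C]_d) : 'M[C]_2 :=
  \tr (X *m D) *: sigmaz.

Lemma diff_channel_dich (A B : 'M[C]_2) :
  diff_channel (dich A) (dich B) = sigmaz_channel (A - B).
Proof.
apply/funext => X; rewrite /diff_channel /meas_channel !sum_ord2 /dich /=.
rewrite /sigmaz_channel /sigmaz !mulmxBr mulmx1 !linearB /=.
by apply/matrixP => i j; rewrite !mxE; ring.
Qed.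

Lemma choi_sigmaz_channel d (D : 'M[C]_d) : choi (sigmaz_channel D) = sigmaz *t D^T.
Proof.
rewrite /choi [D^T]matrix_sum_delta tensmx_sumr; apply: eq_bigr => i _.
rewrite tensmx_sumr; apply: eq_bigr => j _.
by rewrite /sigmaz_channel mxtrace_delta_mul tensmxZl tensmxZr mxE.
Qed.

Lemma ext_id_sigmaz_channel_rank1 d (w : 'cV[C]_d) (x : 'cV[C]_(d * d)) :
  ext_id (sigmaz_channel (- (w *m w ^t*))) (x *m x ^t*) =
  - (sigmaz *t (contract1 w x *m (contract1 w x) ^t*)).
Proof.
rewrite ext_idE -tensmxNr -sum_tens_block_rank1 tensmx_sumr; apply: eq_bigr => i _.
rewrite tensmx_sumr; apply: eq_bigr => a _.
by rewrite /sigmaz_channel mxtrace_delta_mul tensmxZl tensmxZr.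
Qed.

Lemma me_norm_sigmaz_rank1 d (w : 'cV[C]_d) (s : R) : sqnorm w = s%:C ->
  me_norm (sigmaz_channel (- (w *m w ^t*))) = d%:R^-1 * (2%:R * s).
Proof.
move=> ws; rewrite /me_norm choi_sigmaz_channel.
have -> : (- (w *m w ^t*))^T = - (map_mx Num.conj w *m (map_mx Num.conj w) ^t*).
  rewrite linearN; congr (- _); apply/matrixP => i j.
  by rewrite !mxE !big_ord1 !mxE conjCK mulrC.
rewrite tensmxNr scalerN trace_normN.
rewrite (_ : (d%:R)^-1 = ((d%:R)^-1 : R)%:C :> C); last by rewrite fmorphV rmorph_nat.
by rewrite (trace_norm_sigmaz_outer _ (etrans (sqnorm_conj w) ws)) // invr_ge0 ler0n.
Qed.

Lemma densitymx_outer n (x : 'cV[C]_n) (c : R) :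
  0 <= c -> c%:C * sqnorm x = 1 -> densitymx (c%:C *: (x *m adjmx x)).
Proof.
move=> c0 cx1; rewrite adjmxE; split; last by rewrite mxtraceZ mxtrace_outer.
apply/psdmxE => v; rewrite -scalemxAr -scalemxAl mxE.
by rewrite mulr_ge0 ?lecR ?qform_outer_ge0.
Qed.

Lemma diamond_norm_sigmaz_rank1 d (w : 'cV[C]_d) (s : R) :
  sqnorm w = s%:C -> 0 < s ->
  diamond_norm (sigmaz_channel (- (w *m w ^t*))) = 2%:R * s.
Proof.
move=> ws s_gt0; have s0 := ltW s_gt0.
have s2C : (2%:R * s)%:C = 2%:R * s%:C by rewrite rmorphM rmorph_nat.
apply: sup_eq_max => [|r [rho [rho_dens ->]]]; last first.
  apply: (trace_norm_ext_id_le rho_dens) => [|U x Uu]; first by rewrite mulr_ge0.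
  rewrite ext_id_sigmaz_channel_rank1 mulmxN linearN normrN.
  apply: le_trans (trace_sigmaz_outer_le _ Uu) _.
  by rewrite s2C -mulrA ler_pM2l ?ltr0n // -ws sqnorm_contract1_le.
(* contract1 w (w (x) w) = |w|^2 w, so the normalized state w (x) w attains the bound. *)
pose x0 : 'cV[C]_(d * d) := w *t w.
have x0n : sqnorm x0 = (s * s)%:C by rewrite sqnorm_tensmx ws rmorphM.
exists ((s ^- 2)%:C *: (x0 *m adjmx x0)); split.
  apply: densitymx_outer; rewrite ?invr_ge0 ?exprn_ge0 // x0n -rmorphM expr2.
  by rewrite mulVf ?mulf_neq0 ?gt_eqF.
rewrite adjmxE ext_idZ ext_id_sigmaz_channel_rank1 contract1_tensmx -/(sqnorm w) ws.
have -> : (s%:C *: w) *m (s%:C *: w) ^t* = (s * s)%:C *: (w *m w ^t*).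
  rewrite [(_ *: _)^T]linearZ /= map_mxZ /= conj_realC -scalemxAl -scalemxAr.
  by rewrite scalerA rmorphM.
rewrite tensmxZr scalerN scalerA trace_normN -rmorphM.
rewrite (trace_norm_sigmaz_outer _ ws) ?mulr_ge0 ?invr_ge0 ?exprn_ge0 //.
by field; rewrite gt_eqF.
Qed.

Lemma MEWC_dich_rank1 (A B : 'M[C]_2) (w : 'cV[C]_2) (s : R) :
  A - B = - (w *m w ^t*) -> sqnorm w = s%:C -> 0 < s -> MEWC (dich A) (dich B).
Proof.
move=> ABw ws s_gt0; rewrite /MEWC diff_channel_dich ABw.
rewrite (diamond_norm_sigmaz_rank1 ws s_gt0) (me_norm_sigmaz_rank1 ws).
by rewrite mulrA mulfV ?mul1r // pnatr_eq0.
Qed.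

End Norms.

Section Example.
Variable R : realType.
Local Open Scope complex_scope.
Local Open Scope ring_scope.
Local Open Scope sesquilinear_scope.
Local Notation C := R[i].

Lemma psdmx_mx2 (a c : R) (b : C) :
  0 < a -> `|b| ^+ 2 <= (a * c)%:C -> psdmx (mx2 a%:C b b^* c%:C).
Proof.
move=> a_gt0 b_le; apply/psdmxE => v; rewrite -(pmulr_rge0 _ (_ : 0 < a%:C)) ?ltcR //.
have -> : a%:C * (v ^t* *m mx2 a%:C b b^* c%:C *m v) 0 0 =
    `|a%:C * v 0 0 + b * v 1 0| ^+ 2 + ((a * c)%:C - `|b| ^+ 2) * `|v 1 0| ^+ 2.
  by rewrite !(mxE, sum_ord2) /= !normCK rmorphD !rmorphM /= conj_realC; ring.
by rewrite addr_ge0 ?mulr_ge0 ?subr_ge0 ?exprn_ge0.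
Qed.

Lemma povm_dich (E : 'M[C]_2) : psdmx E -> psdmx (1%:M - E) -> povm (dich E).
Proof.
move=> E_psd E1_psd; split; first by move=> i; rewrite /dich; case: ifP.
by rewrite sum_ord2 /dich /= addrC subrK.
Qed.

Lemma one_sub_mx2 (a c : R) (b : C) :
  1%:M - mx2 a%:C b b^* c%:C = mx2 (1 - a)%:C (- b) (- b)^* (1 - c)%:C.
Proof.
apply/matrixP => i j; rewrite !mxE rmorphN !rmorphB /=.
by case: i => [[|[|//]] ?]; case: j => [[|[|//]] ?]; rewrite /= ?mulr1n ?mulr0n ?sub0r.
Qed.

Lemma povm_dich_mx2 (a c : R) (b : C) : 0 < a < 1 ->
  `|b| ^+ 2 <= (a * c)%:C -> `|b| ^+ 2 <= ((1 - a) * (1 - c))%:C ->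
  povm (dich (mx2 a%:C b b^* c%:C)).
Proof.
case/andP=> a_gt0 a_lt1 bM bN; apply: povm_dich; first exact: psdmx_mx2.
by rewrite one_sub_mx2; apply: psdmx_mx2; rewrite ?subr_gt0 ?normrN.
Qed.

Lemma sqr_norm_realC (r : R) : `|r%:C| ^+ 2 = (r ^+ 2)%:C.
Proof. by rewrite -add_Re2_Im2 /= expr0n addr0. Qed.

Local Notation r10 := (Num.sqrt (10%:R^-1 : R)).

Definition ex_w : 'cV[C]_2 :=
  \col_i (Num.sqrt (if i == 0 then 5%:R^-1 else 2%:R^-1))%:C.

Lemma exM0E : exM0 R = mx2 (10%:R^-1)%:C 0%:C (0%:C)^* (5%:R^-1)%:C.
Proof. by rewrite /exM0 conj_realC rmorph0 !fmorphV !rmorph_nat. Qed.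

Lemma exN0E : exN0 R = mx2 (3%:R / 10%:R)%:C r10%:C (r10%:C)^* (7%:R / 10%:R)%:C.
Proof. by rewrite /exN0 conj_realC !rmorphM !fmorphV !rmorph_nat. Qed.

Lemma povm_exM0 : povm (dich (exM0 R)).
Proof.
rewrite exM0E; apply: povm_dich_mx2; rewrite ?sqr_norm_realC ?lecR ?expr0n /=.
- by apply/andP; split; lra.
- lra.
- lra.
Qed.

Lemma povm_exN0 : povm (dich (exN0 R)).
Proof.
have r10_sqr : r10 ^+ 2 = 10%:R^-1 by rewrite sqr_sqrtr // invr_ge0 ler0n.
rewrite exN0E; apply: povm_dich_mx2; rewrite ?sqr_norm_realC ?lecR ?r10_sqr.
- by apply/andP; split; lra.
- lra.
- lra.
Qed.

Lemma sqnorm_ex_w : sqnorm ex_w = (7%:R / 10%:R)%:C.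
Proof.
rewrite sqnormE sum_ord2 !mxE /= !sqr_norm_realC !sqr_sqrtr ?invr_ge0 ?ler0n //.
by rewrite -rmorphD; congr (_%:C); field.
Qed.

Lemma exM0_sub_exN0 : exM0 R - exN0 R = - (ex_w *m ex_w ^t*).
Proof.
rewrite exM0E exN0E; apply/matrixP => i j; rewrite !mxE big_ord1 !mxE !conj_realC.
have sqrt_sqr (x : R) : 0 <= x -> Num.sqrt x * Num.sqrt x = x.
  by move=> x0; rewrite -expr2 sqr_sqrtr.
have r10E : Num.sqrt (5%:R^-1 : R) * Num.sqrt 2%:R^-1 = r10.
  by rewrite -sqrtrM ?invr_ge0 ?ler0n // -invfM -natrM.
case: i => [[|[|//]] ?]; case: j => [[|[|//]] ?];
  rewrite /= -(rmorphM (real_complex R)) -(rmorphB (real_complex R)) -(rmorphN (real_complex R)).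
- by congr (_%:C); rewrite sqrt_sqr ?invr_ge0 ?ler0n //; lra.
- by rewrite r10E sub0r.
- by rewrite mulrC r10E sub0r.
- by congr (_%:C); rewrite sqrt_sqr ?invr_ge0 ?ler0n //; lra.
Qed.

Lemma exM0_exN0_noncomm : exM0 R *m exN0 R != exN0 R *m exM0 R.
Proof.
have r10_gt0 : 0 < r10 by rewrite sqrtr_gt0 invr_gt0 ltr0n.
apply/eqP => /matrixP/(_ 0 1); rewrite exM0E exN0E !(mxE, sum_ord2) /=.
rewrite -!(rmorphM (real_complex R)) -!(rmorphD (real_complex R)) => /complexI.
lra.
Qed.

End Example.

Theorem corollary7 (R : realType) :
  (exists M N : 'I_2 -> 'M[R[i]]_2,
     [/\ povm M, povm N,
         (exists i j, M i *m N j != N j *m M i) & MEWC M N]) /\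
  [/\ povm (dich (exM0 R)), povm (dich (exN0 R)),
      exM0 R *m exN0 R != exN0 R *m exM0 R &
      MEWC (dich (exM0 R)) (dich (exN0 R))].
Proof.
have ex_MEWC : MEWC (dich (exM0 R)) (dich (exN0 R)).
  apply: (MEWC_dich_rank1 (@exM0_sub_exN0 R) (@sqnorm_ex_w R)); lra.
split; last by split; [exact: povm_exM0 | exact: povm_exN0 | exact: exM0_exN0_noncomm |].
exists (dich (exM0 R)), (dich (exN0 R)); split => //; [exact: povm_exM0 | exact: povm_exN0 |].
by exists 0, 0; exact: exM0_exN0_noncomm.
Qed.
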